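(* For real $a,c,d$ and integer $k$, let \[ \begin{aligned} \lambda(k,a,c,d)={}&k^3\left(6a^4-6a^3+a^2+2ac+2d\right)\\ &+k^2\left(-384a^5+324a^4-42a^3-144a^2c-6ac-192ad-12d\right)\\ &+k\left(4608a^6-3072a^5+618a^4+2304a^3c-36a^3+144a^2c+4608a^2d-a^2+4ac+576ad+22d\right)\\ &+4608a^6-2688a^5-6144a^4c+300a^4-24576a^3d-4608a^2d-384ad-12d. \end{aligned} \] Let $a>\frac{22}{10}$, and let $c,d$ satisfy \[ \tfrac{1}{192}\left(-768a^3+768a^2-160a+7\right)\le c\le \tfrac{1}{512}\left(-1536a^3+1728a^2-424a+25\right), \] \[ \tfrac12\left(-6a^4+6a^3-a^2-2ac\right)\le d\le \tfrac{1}{2048}\left(768a^3-512a^2-512ac+104a+192c-7\right). \] Then there exists an integer $k\ge 4$ such that $\lambda(k,a,c,d)<0$. *)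

From Stdlib Require Import Reals ZArith.
Open Scope R_scope.

Definition lam (k : Z) (a c d : R) : R :=
  let x := IZR k in
    x ^ 3 * (6 * a ^ 4 - 6 * a ^ 3 + a ^ 2 + 2 * a * c + 2 * d)
  + x ^ 2 * (- 384 * a ^ 5 + 324 * a ^ 4 - 42 * a ^ 3 - 144 * a ^ 2 * c
             - 6 * a * c - 192 * a * d - 12 * d)
  + x * (4608 * a ^ 6 - 3072 * a ^ 5 + 618 * a ^ 4 + 2304 * a ^ 3 * c
         - 36 * a ^ 3 + 144 * a ^ 2 * c + 4608 * a ^ 2 * d - a ^ 2
         + 4 * a * c + 576 * a * d + 22 * d)
  + (4608 * a ^ 6 - 2688 * a ^ 5 - 6144 * a ^ 4 * c + 300 * a ^ 4
     - 24576 * a ^ 3 * d - 4608 * a ^ 2 * d - 384 * a * d - 12 * d).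

From Stdlib Require Import Reals Lra Psatz.
Open Scope R_scope.

(* Take k = ⌈35a⌉ and write x = IZR k, so 35a <= x <= 35a + 1.
   The polynomial lambda has no product of c and d, so it is affine in d:
     lambda(x,a,c,d) = lambda(x,a,c,d0(c)) + slope(x,a) * (d - d0(c)),
   where d0(c) is the lower bound on d.  Since d >= d0(c), it suffices that
   slope(x,a) < 0 and that the "edge" value e(c) = lambda(x,a,c,d0(c)) is
   negative.  As d0 is affine in c, so is e, hence e is negative on the
   whole c-interval as soon as it is negative at both endpoints.
   This reduces the theorem to three polynomial inequalities in (a, x).
   Each one is proved by substituting a = 11/5 + u, x = 35a + s with u > 0,
   s in [0,1]: the result is a polynomial in u whose constant coefficient
   is negative and whose other coefficients are non-positive, each being a
   polynomial in s that is bounded using 0 <= s^j <= 1. *)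

Definition lamR (x a c d : R) : R :=
    x ^ 3 * (6 * a ^ 4 - 6 * a ^ 3 + a ^ 2 + 2 * a * c + 2 * d)
  + x ^ 2 * (- 384 * a ^ 5 + 324 * a ^ 4 - 42 * a ^ 3 - 144 * a ^ 2 * c
             - 6 * a * c - 192 * a * d - 12 * d)
  + x * (4608 * a ^ 6 - 3072 * a ^ 5 + 618 * a ^ 4 + 2304 * a ^ 3 * c
         - 36 * a ^ 3 + 144 * a ^ 2 * c + 4608 * a ^ 2 * d - a ^ 2
         + 4 * a * c + 576 * a * d + 22 * d)
  + (4608 * a ^ 6 - 2688 * a ^ 5 - 6144 * a ^ 4 * c + 300 * a ^ 4
     - 24576 * a ^ 3 * d - 4608 * a ^ 2 * d - 384 * a * d - 12 * d).

Lemma lam_lamR (k : Z) (a c d : R) : lam k a c d = lamR (IZR k) a c d.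
Proof. reflexivity. Qed.

Definition c_lo (a : R) : R := / 192 * (- 768 * a ^ 3 + 768 * a ^ 2 - 160 * a + 7).
Definition c_hi (a : R) : R := / 512 * (- 1536 * a ^ 3 + 1728 * a ^ 2 - 424 * a + 25).
Definition d_lo (a c : R) : R := / 2 * (- 6 * a ^ 4 + 6 * a ^ 3 - a ^ 2 - 2 * a * c).

(* The coefficient of d in lamR. *)
Definition slope (x a : R) : R :=
  2 * x ^ 3 - (192 * a + 12) * x ^ 2 + (4608 * a ^ 2 + 576 * a + 22) * x
  - (24576 * a ^ 3 + 4608 * a ^ 2 + 384 * a + 12).

Definition edge (x a c : R) : R := lamR x a c (d_lo a c).

Lemma lamR_affine_d (x a c d d0 : R) :
  lamR x a c d = lamR x a c d0 + slope x a * (d - d0).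
Proof. unfold lamR, slope; ring. Qed.

Lemma edge_affine (x a c : R) :
  edge x a c = edge x a 0 + (edge x a 1 - edge x a 0) * c.
Proof. unfold edge, lamR, d_lo; ring. Qed.

Lemma affine_neg_between (p q lo hi c : R) :
  lo <= c <= hi -> p + q * lo < 0 -> p + q * hi < 0 -> p + q * c < 0.
Proof. intros Hc Hlo Hhi; destruct (Rle_or_lt 0 q); nra. Qed.

Lemma edge_neg_between (x a c : R) :
  c_lo a <= c <= c_hi a ->
  edge x a (c_lo a) < 0 -> edge x a (c_hi a) < 0 -> edge x a c < 0.
Proof.
  rewrite (edge_affine x a c), (edge_affine x a (c_lo a)), (edge_affine x a (c_hi a)).
  apply affine_neg_between.
Qed.

Lemma horner_lt0 (u p q : R) : 0 <= u -> p < 0 -> q <= 0 -> p + u * q < 0.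
Proof. intros; nra. Qed.

Lemma horner_le0 (u p q : R) : 0 <= u -> p <= 0 -> q <= 0 -> p + u * q <= 0.
Proof. intros; nra. Qed.

Lemma unit_pow (s : R) (n : nat) : 0 <= s <= 1 -> 0 <= s ^ n <= 1.
Proof.
  intros Hs; split; [apply pow_le; lra|].
  rewrite <- (pow1 n); apply pow_incr; lra.
Qed.

Ltac horner_signs u s :=
  repeat first [apply (horner_lt0 u) | apply (horner_le0 u)];
  pose proof (unit_pow s 2); pose proof (unit_pow s 3); lra.

Lemma slope_neg (a x : R) : 11/5 < a -> 35 * a <= x <= 35 * a + 1 -> slope x a < 0.
Proof.
  intros Ha Hx; set (u := a - 11/5); set (s := x - 35 * a).
  replace (slope x a) with
    (-16344816/125 - 193292/25 * s + 138/5 * s ^ 2 + 2 * s ^ 3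
     + u * (-4523428/25 - 33924/5 * s + 18 * s ^ 2
     + u * (-416358/5 - 1482 * s
     + u * (-12746))))
    by (unfold slope, u, s; field).
  assert (0 <= s <= 1) by (unfold s; lra).
  assert (0 <= u) by (unfold u; lra).
  horner_signs u s.
Qed.

Lemma edge_lo_neg (a x : R) :
  11/5 < a -> 35 * a <= x <= 35 * a + 1 -> edge x a (c_lo a) < 0.
Proof.
  intros Ha Hx; set (u := a - 11/5); set (s := x - 35 * a).
  replace (edge x a (c_lo a)) with
    (-1567224747/25000 - 8361481293/100000 * s - 21786831/20000 * s ^ 2
     + u * (-8292261951/20000 - 781739493/4000 * s - 8012229/4000 * s ^ 2
     + u * (-148539969/200 - 72907063/400 * s - 137797/100 * s ^ 2
     + u * (-97811789/160 - 847991/10 * s - 2102/5 * s ^ 2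
     + u * (-1048653/4 - 19684 * s - 48 * s ^ 2
     + u * (-57214 - 1824 * s
     + u * (-5040)))))))
    by (unfold edge, lamR, d_lo, c_lo, u, s; field).
  assert (0 <= s <= 1) by (unfold s; lra).
  assert (0 <= u) by (unfold u; lra).
  horner_signs u s.
Qed.

Lemma edge_hi_neg (a x : R) :
  11/5 < a -> 35 * a <= x <= 35 * a + 1 -> edge x a (c_hi a) < 0.
Proof.
  intros Ha Hx; set (u := a - 11/5); set (s := x - 35 * a).
  replace (edge x a (c_hi a)) with
    (-4697664417567/5000000 + 6485530491/4000000 * s + 630486153/800000 * s ^ 2
     + u * (-12936324028131/4000000 + 42021676791/800000 * s + 16312851/6400 * s ^ 2
     + u * (-921708131427/200000 + 1876062309/16000 * s + 602727/200 * s ^ 2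
     + u * (-113328773241/32000 + 10754211/100 * s + 16881/10 * s ^ 2
     + u * (-317647053/200 + 247923/5 * s + 456 * s ^ 2
     + u * (-20775651/50 + 57216/5 * s + 48 * s ^ 2
     + u * (-292776/5 + 1056 * s
     + u * (-3408))))))))
    by (unfold edge, lamR, d_lo, c_hi, u, s; field).
  assert (0 <= s <= 1) by (unfold s; lra).
  assert (0 <= u) by (unfold u; lra).
  horner_signs u s.
Qed.

Lemma up_35a (a : R) : 35 * a <= IZR (up (35 * a)) <= 35 * a + 1.
Proof. destruct (archimed (35 * a)); lra. Qed.

Theorem lemma7p5 (a c d : R) :
  22 / 10 < a ->
  / 192 * (- 768 * a ^ 3 + 768 * a ^ 2 - 160 * a + 7) <= c ->
  c <= / 512 * (- 1536 * a ^ 3 + 1728 * a ^ 2 - 424 * a + 25) ->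
  / 2 * (- 6 * a ^ 4 + 6 * a ^ 3 - a ^ 2 - 2 * a * c) <= d ->
  d <= / 2048 * (768 * a ^ 3 - 512 * a ^ 2 - 512 * a * c + 104 * a + 192 * c - 7) ->
  exists k : Z, (4 <= k)%Z /\ lam k a c d < 0.
Proof.
  intros Ha Hc_lo Hc_hi Hd_lo _.
  assert (Ha' : 11/5 < a) by lra.
  pose proof (up_35a a) as Hx.
  exists (up (35 * a)); split.
  - apply le_IZR; lra.
  - rewrite lam_lamR, (lamR_affine_d _ a c d (d_lo a c)).
    set (x := IZR (up (35 * a))) in *.
    assert (Hedge : edge x a c < 0).
    { apply edge_neg_between.
      - unfold c_lo, c_hi; lra.
      - exact (edge_lo_neg a x Ha' Hx).
      - exact (edge_hi_neg a x Ha' Hx). }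
    pose proof (slope_neg a x Ha' Hx) as Hslope.
    assert (Hd : 0 <= d - d_lo a c) by (unfold d_lo; lra).
    unfold edge in Hedge; nra.
Qed.
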